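(* Let $A$ be a real $n\times n$ matrix of the form $A=CDE$, where $C,E$ are invertible real $n\times n$ matrices and $D$ is a diagonal matrix with some zero entries on its main diagonal. Let $D'$ be the diagonal matrix obtained from $D$ by replacing each zero diagonal entry with $1$ (and keeping the nonzero entries), and let $B=(C^{-1})^{\top}D'E$. Then $B$ is invertible and the pair $(A,B)$ is monotone, i.e. $\langle Ax-Ay,\,Bx-By\rangle\ge0$ for all $x,y\in\mathbb{R}^n$.
   Context: For maps $F_1,F_2:\mathbb{R}^n\to\mathbb{R}^n$, the pair $(F_1,F_2)$ is called monotone if $\langle F_1(x)-F_1(y),F_2(x)-F_2(y)\rangle\ge 0$ for all $x,y$. *)

From HB Require Import structures.
From mathcomp Require Import all_boot all_order all_algebra.
Set Implicit Arguments. Unset Strict Implicit. Unset Printing Implicit Defensive.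
Import Order.TTheory GRing.Theory Num.Theory.
Local Open Scope ring_scope.

Definition inner (R : realFieldType) (n : nat) (u v : 'cV[R]_n) : R :=
  \sum_(i < n) u i 0 * v i 0.

Definition monotone_pair (R : realFieldType) (n : nat)
  (F1 F2 : 'cV[R]_n -> 'cV[R]_n) : Prop :=
  forall x y : 'cV[R]_n, 0 <= inner (F1 x - F1 y) (F2 x - F2 y).

Definition replace_zero_diag (R : realFieldType) (n : nat) (d : 'rV[R]_n)
  : 'M[R]_n :=
  diag_mx (\row_i (if d 0 i == 0 then 1 else d 0 i)).

From HB Require Import structures.
From mathcomp Require Import all_boot all_order all_algebra.
Import Order.TTheory GRing.Theory Num.Theory.
Local Open Scope ring_scope.

(* By linearity, monotonicity of (A, B) means <A z, B z> >= 0 for every z.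
   Moving C across the inner product cancels it against (C^-1)^T, so
   <A z, B z> = <D w, D' w> with w = E z, which is a sum of terms
   d_i d'_i w_i^2 where d_i d'_i is either 0 or d_i^2. *)

Lemma innerE (R : realFieldType) (n : nat) (u v : 'cV[R]_n) :
  inner u v = (u^T *m v) 0 0.
Proof. by rewrite /inner !mxE; apply: eq_bigr => i _; rewrite mxE. Qed.

Lemma inner_mulmxl (R : realFieldType) (n : nat) (M : 'M[R]_n) (u v : 'cV[R]_n) :
  inner (M *m u) v = inner u (M^T *m v).
Proof. by rewrite !innerE trmx_mul mulmxA. Qed.

Lemma inner_mulmx_invtr (R : realFieldType) (n : nat) (C : 'M[R]_n)
  (u v : 'cV[R]_n) :
  C \in unitmx -> inner (C *m u) ((invmx C)^T *m v) = inner u v.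
Proof.
by move=> hC; rewrite inner_mulmxl mulmxA -trmx_mul mulVmx // trmx1 mul1mx.
Qed.

Lemma inner_diag_ge0 (R : realFieldType) (n : nat) (d d' : 'rV[R]_n)
  (w : 'cV[R]_n) :
  (forall i, 0 <= d 0 i * d' 0 i) ->
  0 <= inner (diag_mx d *m w) (diag_mx d' *m w).
Proof.
move=> dd'_ge0; apply: sumr_ge0 => i _; rewrite !mul_diag_mx !mxE.
by rewrite mulrACA mulr_ge0 // -expr2 sqr_ge0.
Qed.

Lemma monotone_pair_mulmx (R : realFieldType) (n : nat) (A B : 'M[R]_n) :
  (forall z, 0 <= inner (A *m z) (B *m z)) ->
  monotone_pair (mulmx A) (mulmx B).
Proof. by move=> AB_ge0 x y; rewrite -!mulmxBr. Qed.

Lemma replace_zero_diag_unitmx (R : realFieldType) (n : nat) (d : 'rV[R]_n) :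
  replace_zero_diag d \in unitmx.
Proof.
rewrite unitmxE det_diag unitfE; apply/prodf_neq0 => i _; rewrite mxE.
by case: ifP => [_|/negbT //]; rewrite oner_eq0.
Qed.

Lemma mul_replace_zero_diag_ge0 (R : realFieldType) (n : nat) (d : 'rV[R]_n) i :
  0 <= d 0 i * (\row_j (if d 0 j == 0 then 1 else d 0 j)) 0 i.
Proof.
by rewrite mxE; case: eqP => [->|_]; rewrite ?mul0r // -expr2 sqr_ge0.
Qed.

Theorem theorem3p2 (R : realFieldType) (n : nat)
  (C E : 'M[R]_n) (d : 'rV[R]_n)
  (hC : C \in unitmx) (hE : E \in unitmx)
  (hzero : exists i : 'I_n, d 0 i = 0) :
  let A := C *m diag_mx d *m E in
  let B := (invmx C)^T *m replace_zero_diag d *m E in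
  B \in unitmx /\ monotone_pair (fun x => A *m x) (fun x => B *m x).
Proof.
move=> A B; split.
  by rewrite !unitmx_mul unitmx_tr unitmx_inv hC replace_zero_diag_unitmx hE.
apply: monotone_pair_mulmx => z.
rewrite -!mulmxA inner_mulmx_invtr //.
exact/inner_diag_ge0/mul_replace_zero_diag_ge0.
Qed.
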